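(* Let $(R,\mathfrak m)$ be a regular local ring with $\dim R\ge 2$, let $\{(R_i,\mathfrak m_i)\}_{i\ge 0}$ be an infinite sequence of local quadratic transforms with $R_0=R$, and let $S=\bigcup_{i\ge0}R_i$. The following are equivalent: (1) $S$ is dominated by a DVR; (2) $S$ is a DVR; (3) $S$ is a Noetherian ring.
   Context: A local quadratic transform of a regular local ring $(A,\mathfrak n)$ is a local ring $A[\mathfrak n/x]_{\mathfrak q}$ with $x\in\mathfrak n\setminus\mathfrak n^2$ and $\mathfrak q$ a prime ideal of $A[\mathfrak n/x]$ containing $\mathfrak n$. The sequence satisfies: for each $i\ge 0$, $R_{i+1}$ is a local quadratic transform of $R_i$, $R_i\subsetneq R_{i+1}$, and each $R_i$ is a regular local ring of dimension at least $2$ with maximal ideal $\mathfrak m_i$. $S$ is local with maximal ideal $\bigcup_i\mathfrak m_i$; a local ring $(D,\mathfrak M_D)$ dominates $S$ if $S\subseteq D$ and $\mathfrak M_D\cap S$ is the maximal ideal of $S$. *)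

(* Subrings of a field K are represented as predicates K -> Prop. *)
From mathcomp Require Import all_boot all_order all_algebra.
Set Implicit Arguments. Unset Strict Implicit. Unset Printing Implicit Defensive.
Import GRing.Theory.
Local Open Scope ring_scope.

Section CommAlg.
Variable K : fieldType.
Implicit Types (A B I P : K -> Prop).

Definition is_subring A :=
  A 0 /\ A 1 /\ (forall x y, A x -> A y -> A (x - y)) /\
  (forall x y, A x -> A y -> A (x * y)).

Definition is_ideal A I :=
  (forall x, I x -> A x) /\ I 0 /\ (forall x y, I x -> I y -> I (x + y)) /\
  (forall a x, A a -> I x -> I (a * x)).

Definition ideal_gen A (s : seq K) : K -> Prop :=
  fun x => exists c : nat -> K, (forall i, A (c i)) /\
    x = \sum_(i < size s) c i * s`_i.

Definition noetherian A :=
  is_subring A /\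
  forall I, is_ideal A I -> exists s : seq K, forall x, I x <-> ideal_gen A s x.

Definition principal_ideal_ring A :=
  forall I, is_ideal A I -> exists g : K, forall x, I x <-> ideal_gen A [:: g] x.

Definition is_prime A P :=
  is_ideal A P /\ ~ P 1 /\ (forall x y, A x -> A y -> P (x * y) -> P x \/ P y).

(* non-units of A; for a local ring this is its maximal ideal *)
Definition nonunits A : K -> Prop := fun x => A x /\ ~ (x != 0 /\ A x^-1).

Definition is_local A := is_subring A /\ is_ideal A (nonunits A).

Definition has_prime_chain A (n : nat) :=
  exists P : nat -> K -> Prop,
    (forall i, (i <= n)%N -> is_prime A (P i)) /\
    (forall i, (i < n)%N -> (forall x, P i x -> P i.+1 x) /\ exists x, P i.+1 x /\ ~ P i x).

Definition krull_dim A (d : nat) := has_prime_chain A d /\ ~ has_prime_chain A d.+1.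

Definition regular_local_dim A (d : nat) :=
  noetherian A /\ is_local A /\ krull_dim A d /\
  exists s : seq K, size s = d /\ forall x, nonunits A x <-> ideal_gen A s x.

Definition max_sq A : K -> Prop :=
  fun x => exists (k : nat) (f g : nat -> K),
    (forall i, nonunits A (f i) /\ nonunits A (g i)) /\ x = \sum_(i < k) f i * g i.

(* the ring A[n/x]: smallest subring of K containing A and all a/x, a in n *)
Definition blowup_ring A (x : K) : K -> Prop :=
  fun y => forall C, is_subring C -> (forall a, A a -> C a) ->
    (forall a, nonunits A a -> C (a / x)) -> C y.

Definition localization B (q : K -> Prop) : K -> Prop :=
  fun y => exists b c, B b /\ B c /\ ~ q c /\ y = b / c.

Definition local_quadratic_transform A A' :=
  exists x, nonunits A x /\ ~ max_sq A x /\
  exists q, is_prime (blowup_ring A x) q /\ (forall a, nonunits A a -> q a) /\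
    forall y, A' y <-> localization (blowup_ring A x) q y.

(* discrete valuation ring: a local principal ideal domain that is not a field *)
Definition is_DVR A :=
  is_local A /\ principal_ideal_ring A /\ exists x, nonunits A x /\ x != 0.

End CommAlg.

Definition dominated_by_DVR (K : fieldType) (S : K -> Prop) :=
  exists (L : fieldType) (f : {rmorphism K -> L}) (D : L -> Prop),
    is_DVR D /\ (forall x, S x -> D (f x)) /\
    (forall x, S x -> (nonunits D (f x) <-> nonunits S x)).

(** Pick in every R_i an element x_i of m_i \ m_i^2 with m_i / x_i ⊆ R_(i+1);
    then x_(i+1) divides x_i in S.  A dominating DVR (or S itself, if S is
    Noetherian) satisfies ACC on principal ideals, and domination pulls this
    back to S: from some N on, x_N divides every x_m, so t := x_N divides
    every element of every m_i, i.e. generates the maximal ideal of S.  The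
    same ACC forbids a nonzero element of S from being divisible by all powers
    of t, so every nonzero element is t^j times a unit and S is a DVR. *)
From mathcomp Require Import all_boot all_order all_algebra.
From mathcomp Require Import ring.
From Stdlib Require Import Classical IndefiniteDescription.
From Stdlib Require Wf_nat.
Set Implicit Arguments. Unset Strict Implicit. Unset Printing Implicit Defensive.
Import GRing.Theory.
Local Open Scope ring_scope.

Definition dvd_in (K : fieldType) (A : K -> Prop) (d x : K) :=
  exists c, A c /\ x = c * d.

Definition chain_union (K : fieldType) (R : nat -> K -> Prop) : K -> Prop :=
  fun x => exists i, R i x.

Lemma nat_chain_mono (T : Type) (P : nat -> T -> Prop) i j x :
  (forall k y, P k y -> P k.+1 y) -> (i <= j)%N -> P i x -> P j x.
Proof.
move=> HP /subnKC <-; elim: (j - i)%N => [|n IH] Px; first by rewrite addn0.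
by rewrite addnS; apply: HP; apply: IH.
Qed.

Section Subring.
Variables (K : fieldType) (A : K -> Prop).
Hypothesis HA : is_subring A.

Lemma subring0 : A 0. Proof. by case: HA. Qed.
Lemma subring1 : A 1. Proof. by case: HA => _ []. Qed.

Lemma subringB x y : A x -> A y -> A (x - y).
Proof. by case: HA => _ [_ [HB _]]; apply: HB. Qed.

Lemma subringM x y : A x -> A y -> A (x * y).
Proof. by case: HA => _ [_ [_ HM]]; apply: HM. Qed.

Lemma subringD x y : A x -> A y -> A (x + y).
Proof.
move=> Ax Ay; have -> : x + y = x - (0 - y) by rewrite sub0r opprK.
by apply: subringB => //; apply: subringB => //; apply: subring0.
Qed.

Lemma subringX x n : A x -> A (x ^+ n).
Proof.
move=> Ax; elim: n => [|n IH]; first by rewrite expr0; apply: subring1.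
by rewrite exprS; apply: subringM.
Qed.

Lemma dvd_in_refl d : dvd_in A d d.
Proof. by exists 1; rewrite mul1r; split=> //; apply: subring1. Qed.

Lemma dvd_in0 d : dvd_in A d 0.
Proof. by exists 0; rewrite mul0r; split=> //; apply: subring0. Qed.

Lemma dvd_in_trans d y x : dvd_in A d y -> dvd_in A y x -> dvd_in A d x.
Proof.
move=> [e [Ae ->]] [c [Ac ->]]; exists (c * e).
by rewrite mulrA; split=> //; apply: subringM.
Qed.

Lemma dvd_inD d x y : dvd_in A d x -> dvd_in A d y -> dvd_in A d (x + y).
Proof.
move=> [c [Ac ->]] [e [Ae ->]]; exists (c + e).
by rewrite mulrDl; split=> //; apply: subringD.
Qed.

Lemma dvd_inMl a d x : A a -> dvd_in A d x -> dvd_in A d (a * x).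
Proof.
move=> Aa [c [Ac ->]]; exists (a * c).
by rewrite mulrA; split=> //; apply: subringM.
Qed.

Lemma dvd_in_mem d x : A d -> dvd_in A d x -> A x.
Proof. by move=> Ad [c [Ac ->]]; apply: subringM. Qed.

Lemma dvd_in_chain (a : nat -> K) k m :
  (forall n, dvd_in A (a n.+1) (a n)) -> (k <= m)%N -> dvd_in A (a m) (a k).
Proof.
move=> Ha /subnKC <-; elim: (m - k)%N => [|n IH].
  by rewrite addn0; apply: dvd_in_refl.
by rewrite addnS; apply: dvd_in_trans (Ha _) IH.
Qed.

Lemma ideal_gen_seq1 g x : ideal_gen A [:: g] x <-> dvd_in A g x.
Proof.
split; first by case=> c [Ac ->]; exists (c 0%N); rewrite big_ord1.
by case=> c [Ac ->]; exists (fun _ => c); rewrite big_ord1.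
Qed.

Lemma mem_ideal_gen (s : seq K) j : (j < size s)%N -> ideal_gen A s s`_j.
Proof.
move=> Hj; exists (fun i => (i == j)%:R); split.
  by move=> i; case: (i == j); [apply: subring1 | apply: subring0].
rewrite (bigD1 (Ordinal Hj)) //= eqxx mul1r big1 ?addr0 //.
by move=> i; rewrite -val_eqE /= => /negbTE ->; rewrite mul0r.
Qed.

Lemma ideal_gen_dvd_in d (s : seq K) x :
  (forall j, (j < size s)%N -> dvd_in A d s`_j) -> ideal_gen A s x -> dvd_in A d x.
Proof.
move=> Hs [c [Ac ->]]; apply: (big_ind (dvd_in A d)); first exact: dvd_in0.
  exact: dvd_inD.
by move=> i _; apply: dvd_inMl => //; apply: Hs.
Qed.

End Subring.

Lemma unit_not_nonunits (K : fieldType) (A : K -> Prop) c e :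
  A e -> c * e = 1 -> ~ nonunits A c.
Proof.
move=> Ae ce1 [_ []]; have c_neq0 : c != 0.
  by apply: contra_eq_neq ce1 => ->; rewrite mul0r eq_sym oner_neq0.
by split => //; rewrite -[c^-1]mulr1 -ce1 mulKf.
Qed.

Lemma not_nonunits_inv (K : fieldType) (A : K -> Prop) y :
  A y -> ~ nonunits A y -> y != 0 /\ A y^-1.
Proof. by move=> Ay Hy; apply: NNPP => H; apply: Hy. Qed.

Section PrincipalChains.
Variables (K : fieldType) (A : K -> Prop) (a : nat -> K).
Hypotheses (HA : noetherian A) (Aa : forall k, A (a k)).
Hypothesis a_chain : forall k, dvd_in A (a k.+1) (a k).

Let A_subring : is_subring A := HA.1.

Definition chain_ideal : K -> Prop := fun y => exists k, dvd_in A (a k) y.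

Lemma chain_ideal_is_ideal : is_ideal A chain_ideal.
Proof.
split; first by move=> y [k]; apply: dvd_in_mem.
split; first by exists 0%N; apply: dvd_in0.
split; last by move=> b y Ab [k Hk]; exists k; apply: dvd_inMl.
move=> x y [k Hx] [m Hy]; exists (maxn k m); apply: dvd_inD => //.
  exact: dvd_in_trans (dvd_in_chain A_subring a_chain (leq_maxl k m)) Hx.
exact: dvd_in_trans (dvd_in_chain A_subring a_chain (leq_maxr k m)) Hy.
Qed.

Lemma chain_ideal_seq (s : seq K) :
  {in s, forall y, chain_ideal y} -> exists N, {in s, forall y, dvd_in A (a N) y}.
Proof.
elim: s => [|y s IH] Hs; first by exists 0%N.
have [k Hy] := Hs y (mem_head _ _).
have [N HN] := IH (fun z zs => Hs z (mem_behead (s := y :: s) zs)).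
exists (maxn k N) => z; rewrite inE => /orP [/eqP -> | zs].
  by apply: dvd_in_trans (dvd_in_chain A_subring a_chain (leq_maxl _ _)) Hy.
by apply: dvd_in_trans (dvd_in_chain A_subring a_chain (leq_maxr _ _)) (HN z zs).
Qed.

Lemma principal_chain_stationary : exists N, forall m, dvd_in A (a N) (a m).
Proof.
have [s Hs] := HA.2 _ chain_ideal_is_ideal.
have [N HN] : exists N, {in s, forall y, dvd_in A (a N) y}.
  by apply: chain_ideal_seq => y /(nthP 0) [j Hj <-]; apply/Hs/mem_ideal_gen.
exists N => m; apply: (ideal_gen_dvd_in A_subring (s := s)).
  by move=> j Hj; apply/HN/mem_nth.
by apply/Hs; exists m; apply: dvd_in_refl.
Qed.

End PrincipalChains.

Section Domination.
Variables (K L : fieldType) (S : K -> Prop) (D : L -> Prop) (f : {rmorphism K -> L}).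
Hypotheses (HS : is_subring S) (HD : noetherian D).
Hypothesis SD : forall x, S x -> D (f x).
Hypothesis nonunitsSD : forall x, nonunits S x -> nonunits D (f x).

(* A quotient that becomes a unit in D was already a unit in S. *)
Lemma dominated_principal_chain_stationary (a : nat -> K) :
  (forall k, a k != 0) -> (forall k, S (a k)) ->
  (forall k, dvd_in S (a k.+1) (a k)) ->
  exists N, forall m, dvd_in S (a N) (a m).
Proof.
move=> a_neq0 Sa a_chain.
have fa_chain k : dvd_in D (f (a k.+1)) (f (a k)).
  have [c [Sc ->]] := a_chain k; exists (f c).
  by rewrite rmorphM; split=> //; apply: SD.
have [N HN] := principal_chain_stationary HD (fun k => SD (Sa k)) fa_chain.
exists N => m; case: (leqP m N) => [mN | /ltnW Nm]; first exact: dvd_in_chain.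
have [c [Sc aNc]] := dvd_in_chain HS a_chain Nm.
have [e [De fam]] := HN m.
have fce1 : f c * e = 1.
  have fam_neq0 : f (a m) != 0 by rewrite fmorph_eq0.
  apply: (mulIf fam_neq0).
  by rewrite mul1r {2}fam aNc rmorphM mulrA [e * _]mulrC.
have [c_neq0 Sc'] : c != 0 /\ S c^-1.
  by apply: not_nonunits_inv => // /nonunitsSD; apply: unit_not_nonunits De fce1.
by exists c^-1; rewrite aNc mulKf.
Qed.

Lemma dominated_power_bounded t y : t != 0 -> nonunits S t -> S y -> y != 0 ->
  exists k, ~ dvd_in S (t ^+ k) y.
Proof.
move=> t_neq0 t_nonunit Sy y_neq0; apply: NNPP => all_powers.
pose b k := y / t ^+ k.
have tk_neq0 k : t ^+ k != 0 by rewrite expf_neq0.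
have Sb k : S (b k).
  apply: NNPP => Sbk; apply: all_powers; exists k => -[s [Ss Ey]]; apply: Sbk.
  by rewrite /b Ey mulfK.
have b_neq0 k : b k != 0 by rewrite mulf_neq0 ?invr_eq0.
have b_step k : b k = t * b k.+1 by rewrite /b exprS invfM mulrCA mulVKf.
have b_chain k : dvd_in S (b k.+1) (b k).
  by exists t; rewrite -b_step; split=> //; exact: t_nonunit.1.
have [M HM] := dominated_principal_chain_stationary b_neq0 Sb b_chain.
have [c [Sc EM]] := HM M.+1.
apply: (unit_not_nonunits Sc _ t_nonunit); apply: (mulIf (b_neq0 M)).
by rewrite mul1r -mulrA -EM -b_step.
Qed.

End Domination.

Section DVRCriterion.
Variables (K : fieldType) (S : K -> Prop) (t : K).
Hypotheses (HS : is_subring S) (t_neq0 : t != 0) (t_nonunit : nonunits S t).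
Hypothesis nonunits_dvd : forall y, nonunits S y -> dvd_in S t y.
Hypothesis power_bounded :
  forall y, S y -> y != 0 -> exists k, ~ dvd_in S (t ^+ k) y.

Let St : S t := t_nonunit.1.

Lemma nonunitsE y : nonunits S y <-> dvd_in S t y.
Proof.
split; first exact: nonunits_dvd.
move=> [c [Sc ->]]; split; first exact: (subringM HS Sc St).
move=> [ct_neq0 Sct']; apply: t_nonunit.2; split => //.
have c_neq0 : c != 0 by apply: contraNneq ct_neq0 => ->; rewrite mul0r.
suff -> : t^-1 = c * (c * t)^-1 by apply: subringM.
by field; rewrite c_neq0 t_neq0.
Qed.

Lemma uniformizer_local : is_local S.
Proof.
split => //; split; first by move=> x [].
split; first by apply/nonunitsE/dvd_in0.
split; first by move=> x y /nonunitsE Hx /nonunitsE Hy; apply/nonunitsE/dvd_inD.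
by move=> b x Sb /nonunitsE Hx; apply/nonunitsE/dvd_inMl.
Qed.

Lemma uniformizer_factor y : S y -> y != 0 ->
  exists j u, S u /\ u != 0 /\ S u^-1 /\ y = t ^+ j * u.
Proof.
move=> Sy y_neq0; have [k] := power_bounded Sy y_neq0.
elim: k => [|k IH] Hk.
  by exfalso; apply: Hk; exists y; rewrite expr0 mulr1.
case: (classic (dvd_in S (t ^+ k) y)) => [[u [Su Eu]] | Hn]; last exact: IH.
case: (classic (nonunits S u)) => [/nonunits_dvd [v [Sv Ev]] | Hu].
  by exfalso; apply: Hk; exists v; split=> //; rewrite Eu Ev exprSr -mulrA [t * _]mulrC.
have [u_neq0 Su'] := not_nonunits_inv Su Hu.
by exists k, u; rewrite mulrC.
Qed.

Lemma uniformizer_principal : principal_ideal_ring S.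
Proof.
move=> I [I_sub [I0 [_ IM]]].
case: (classic (exists y, I y /\ y != 0)) => [[y [Iy y_neq0]] | I_zero]; last first.
  exists 0 => x; rewrite ideal_gen_seq1; split=> [Ix | [c [_ ->]]]; last by rewrite mulr0.
  suff -> : x = 0 by apply: dvd_in0.
  by apply: NNPP => /eqP x_neq0; apply: I_zero; exists x.
have factor_in_I x : I x -> x != 0 -> exists j u, S u /\ I (t ^+ j) /\ x = u * t ^+ j.
  move=> Ix x_neq0.
  have [j [u [Su [u_neq0 [Su' Ex]]]]] := uniformizer_factor (I_sub _ Ix) x_neq0.
  exists j, u; split=> //; split; last by rewrite Ex mulrC.
  suff -> : t ^+ j = u^-1 * x by apply: IM.
  by rewrite Ex mulrCA mulVf // mulr1.
have I_power : exists j, I (t ^+ j).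
  by have [j [_ [_ [Ij _]]]] := factor_in_I y Iy y_neq0; exists j.
have [j0 [[Ij0 j0_min] _]] :=
  @Wf_nat.dec_inh_nat_subset_has_unique_least_element _ (fun j => classic _) I_power.
exists (t ^+ j0) => x; rewrite ideal_gen_seq1; split=> [Ix | [c [Sc ->]]]; last exact: IM.
case: (eqVneq x 0) => [-> | x_neq0]; first exact: dvd_in0.
have [j [u [Su [Ij ->]]]] := factor_in_I x Ix x_neq0.
have /leP j0j := j0_min j Ij.
exists (u * t ^+ (j - j0)); split; first exact: (subringM HS Su (subringX HS _ St)).
by rewrite -mulrA -exprD subnK.
Qed.

Lemma uniformizer_DVR : is_DVR S.
Proof.
split; first exact: uniformizer_local.
by split; [exact: uniformizer_principal | exists t].
Qed.

End DVRCriterion.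

Section LocalQuadraticTransform.
Variables (K : fieldType) (A A' : K -> Prop).
Hypothesis Hlqt : local_quadratic_transform A A'.

Lemma lqt_subset x : A x -> A' x.
Proof.
have [z [_ [_ [q [[_ [q1 _]] [_ HA']]]]]] := Hlqt.
move=> Ax; apply/HA'; exists x, 1; split; first by move=> C _ HC _; apply: HC.
split; first by move=> C HC _ _; apply: subring1.
by split; last rewrite divr1.
Qed.

Lemma lqt_nonunits x : nonunits A x -> nonunits A' x.
Proof.
have [z [_ [_ [q [[[_ [_ [_ qM]]] _] [mq HA']]]]]] := Hlqt.
move=> Hx; split; first exact/lqt_subset/Hx.1.
move=> [x_neq0 /HA' [b [c [Bb [_ [qc Ex]]]]]]; apply: qc.
have c_neq0 : c != 0.
  by apply: contraTneq x_neq0 => c0; rewrite negbK -invr_eq0 Ex c0 invr0 mulr0.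
have -> : c = b * x by rewrite -[b](mulfVK c_neq0) -Ex mulrAC mulVf // mul1r.
exact: qM Bb (mq x Hx).
Qed.

Lemma lqt_divisor : is_subring A ->
  exists x, nonunits A x /\ x != 0 /\ forall a, nonunits A a -> A' (a / x).
Proof.
move=> HA; have [x [Hx [x_notsq [q [[_ [q1 _]] [_ HA']]]]]] := Hlqt.
exists x; split=> //; split.
  apply/eqP => x0; apply: x_notsq; rewrite x0.
  have nonunits0 : nonunits A 0 by split; [exact: subring0 | case; rewrite eqxx].
  by exists 0%N, (fun _ => 0), (fun _ => 0); rewrite big_ord0.
move=> a Ha; apply/HA'; exists (a / x), 1; split; first by move=> C _ _ HC; apply: HC.
split; first by move=> C HC _ _; apply: subring1.
by split; last rewrite divr1.
Qed.

End LocalQuadraticTransform.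

Section QuadraticTransformSequence.
Variables (K : fieldType) (R : nat -> K -> Prop).
Hypothesis R_subring : forall i, is_subring (R i).
Hypothesis R_lqt : forall i, local_quadratic_transform (R i) (R i.+1).

Local Notation S := (chain_union R).

Lemma chain_mono i j x : (i <= j)%N -> R i x -> R j x.
Proof. by apply: (@nat_chain_mono _ R) => k; apply: lqt_subset. Qed.

Lemma nonunits_chain_mono i j x : (i <= j)%N -> nonunits (R i) x -> nonunits (R j) x.
Proof.
by apply: (@nat_chain_mono _ (fun k => nonunits (R k))) => k; apply: lqt_nonunits.
Qed.

Lemma chain_union_subring : is_subring S.
Proof.
have closed2 op : (forall i x y, R i x -> R i y -> R i (op x y)) ->
    forall x y, S x -> S y -> S (op x y).
  move=> Hop x y [i Hx] [j Hy]; exists (maxn i j).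
  by apply: Hop; [apply: chain_mono Hx | apply: chain_mono Hy];
    rewrite ?leq_maxl ?leq_maxr.
split; first by exists 0%N; apply: subring0.
split; first by exists 0%N; apply: subring1.
by split; apply: closed2 => i; [exact: subringB | exact: subringM].
Qed.

Lemma nonunits_chain_union y : nonunits S y <-> exists i, nonunits (R i) y.
Proof.
split=> [[[i Ry] Hy] | [i Hy]].
  by exists i; split=> // -[y_neq0 Ry']; apply: Hy; split=> //; exists i.
split=> [|[y_neq0 [j Ry']]]; first by exists i; exact: Hy.1.
have [_ []] := nonunits_chain_mono (leq_maxl i j) Hy.
by split=> //; apply: chain_mono Ry'; rewrite leq_maxr.
Qed.

Lemma chain_union_DVR (L : fieldType) (f : {rmorphism K -> L}) (D : L -> Prop) :
  noetherian D -> (forall x, S x -> D (f x)) ->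
  (forall x, nonunits S x -> nonunits D (f x)) -> is_DVR S.
Proof.
move=> HD SD nonunitsSD; have HS := chain_union_subring.
have [x Hx] : exists x : nat -> K, forall i, nonunits (R i) (x i) /\ x i != 0 /\
    forall a, nonunits (R i) a -> R i.+1 (a / x i).
  exact: functional_choice (fun i => lqt_divisor (R_lqt i) (R_subring i)).
have Sx k : S (x k) by exists k; exact: (Hx k).1.1.
have x_chain k : dvd_in S (x k.+1) (x k).
  exists (x k / x k.+1); rewrite divfK ?(Hx k.+1).2.1 //; split=> //.
  by exists k.+2; apply: (Hx k.+1).2.2; exact: (lqt_nonunits (R_lqt k) (Hx k).1).
have [N HN] := dominated_principal_chain_stationary HS HD SD nonunitsSD
  (fun k => (Hx k).2.1) Sx x_chain.
set t := x N.
have t_neq0 : t != 0 := (Hx N).2.1.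
have t_nonunit : nonunits S t.
  by apply/nonunits_chain_union; exists N; exact: (Hx N).1.
apply: (uniformizer_DVR HS t_neq0 t_nonunit).
  move=> y /nonunits_chain_union [i Hy]; apply: (dvd_in_trans HS (HN (maxn i N))).
  exists (y / x (maxn i N)); rewrite divfK; last exact: (Hx (maxn i N)).2.1.
  split=> //; exists (maxn i N).+1; apply: (Hx (maxn i N)).2.2.
  by apply: nonunits_chain_mono Hy; rewrite leq_maxl.
by move=> y; apply: (dominated_power_bounded HS HD SD nonunitsSD).
Qed.

End QuadraticTransformSequence.

Lemma DVR_noetherian (K : fieldType) (A : K -> Prop) : is_DVR A -> noetherian A.
Proof.
move=> [[HA _] [Hpir _]]; split=> // I HI.
by have [g Hg] := Hpir I HI; exists [:: g].
Qed.

Theorem corollary3p9 (K : fieldType) (R : nat -> K -> Prop)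
  (Hreg : forall i, exists d, (2 <= d)%N /\ regular_local_dim (R i) d)
  (Hlqt : forall i, local_quadratic_transform (R i) (R i.+1))
  (Hsub : forall i, (forall x, R i x -> R i.+1 x) /\ exists x, R i.+1 x /\ ~ R i x) :
  let S := fun x => exists i, R i x in
  (dominated_by_DVR S <-> is_DVR S) /\ (is_DVR S <-> noetherian S).
Proof.
move=> S; have R_subring i : is_subring (R i) by have [d [_ [[]]]] := Hreg i.
have dominated_DVR := chain_union_DVR R_subring Hlqt.
split; split.
- move=> [L [f [D [HD [SD HSD]]]]].
  apply: (dominated_DVR L f D (DVR_noetherian HD) SD) => x Hx.
  exact/(HSD x Hx.1).
- by move=> HS; exists K, idfun, S.
- exact: DVR_noetherian.
- by move=> HS; apply: (dominated_DVR K idfun S).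
Qed.
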